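(* Let $S(x,y;t,v)=\sum_{w}x^{i(w)}y^{j(w)}t^{|w|}v^{\mathrm{vert}(w)}$, where the sum runs over all walks $w$ on the slit plane on the ordinary square lattice, $(i(w),j(w))$ is the endpoint, $|w|$ the length and $\mathrm{vert}(w)$ the number of vertical steps $(0,\pm1)$. Let $\delta_1=(1-2t(1+v))(1+2t(1-v))$ and $\delta_2=(1-2t(1-v))(1+2t(1+v))$. Then $$S(x,y;t,v)=\frac{\left(1-2t(v+\bar x)+\sqrt{\delta_1}\right)^{1/2}\left(1+2t(v-\bar x)+\sqrt{\delta_2}\right)^{1/2}}{2\left(1-t(x+\bar x+yv+\bar yv)\right)},$$ with radicals the power series in $t$ with positive constant term.
   Context: $\mathcal H=\{(k,0):k\le0\}$. A walk on the slit plane (ordinary square lattice) is a sequence $(w_0,\dots,w_n)$ in $\mathbb{Z}^2$ with $w_0=(0,0)$, $w_m-w_{m-1}\in\{(\pm1,0),(0,\pm1)\}$, and $w_m\notin\mathcal H$ for $1\le m\le n$. $\bar x=1/x$, $\bar y=1/y$. *)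

(* Formal power series in t are coefficient functions nat -> R. *)
From HB Require Import structures.
From mathcomp Require Import all_boot all_order all_algebra.
Set Implicit Arguments. Unset Strict Implicit. Unset Printing Implicit Defensive.
Import Order.TTheory GRing.Theory Num.Theory.
Local Open Scope ring_scope.

Definition step (s : 'I_4) : int * int :=
  match val s with
  | 0%N => (1, 0)
  | 1%N => (-1, 0)
  | 2%N => (0, 1)
  | _ => (0, -1)
  end.

Definition posx (w : seq 'I_4) : int := \sum_(s <- w) (step s).1.
Definition posy (w : seq 'I_4) : int := \sum_(s <- w) (step s).2.

Definition inH (w : seq 'I_4) : bool := (posy w == 0) && (posx w <= 0).

Definition slit_walk (w : seq 'I_4) : bool :=
  all (fun m => ~~ inH (take m w)) (iota 1 (size w)).

Definition vert (w : seq 'I_4) : nat := count (fun s : 'I_4 => 2 <= val s)%N w.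

Definition fps (R : Type) := nat -> R.

Definition fps_add (R : ringType) (f g : fps R) : fps R := fun n => f n + g n.
Definition fps_mul (R : ringType) (f g : fps R) : fps R :=
  fun n => \sum_(i < n.+1) f i * g (n - i)%N.
Definition fps_lin (R : ringType) (a b : R) : fps R :=
  fun n => if n == 0%N then a else if n == 1%N then b else 0.

Definition S_gf (R : unitRingType) (x y v : R) : fps R :=
  fun n => \sum_(w : n.-tuple 'I_4 | slit_walk w)
             x ^ posx w * y ^ posy w * v ^+ vert w.

Definition is_fps_sqrt (R : numDomainType) (f r : fps R) : Prop :=
  fps_mul r r = f /\ 0 < r 0%N.

Definition delta1 (R : ringType) (v : R) : fps R :=
  fps_mul (fps_lin 1 (-(2 * (1 + v)))) (fps_lin 1 (2 * (1 - v))).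
Definition delta2 (R : ringType) (v : R) : fps R :=
  fps_mul (fps_lin 1 (-(2 * (1 - v)))) (fps_lin 1 (2 * (1 + v))).

Definition radA (R : unitRingType) (x v : R) (r1 : fps R) : fps R :=
  fps_add (fps_lin 1 (-(2 * (v + x^-1)))) r1.
Definition radB (R : unitRingType) (x v : R) (r2 : fps R) : fps R :=
  fps_add (fps_lin 1 (2 * (v - x^-1))) r2.

Definition denom (R : unitRingType) (x y v : R) : fps R :=
  fps_lin 2 (-(2 * (x + x^-1 + y * v + y^-1 * v))).

(* Kernel method.  Sorting slit walks by the height [j] of their endpoint, the
   series [S_j(x)] satisfy [S_j = t (x + 1/x) S_j + t v (S_(j-1) + S_(j+1))]
   for [j <> 0]; the only solution is [S_j = S_0 beta^|j|] with [beta] the small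
   root of [beta = t (x + 1/x) beta + t v (1 + beta^2)].  At height 0 this gives
   [B = S_0 rho] for the boundary term [B] (walks that would enter the slit),
   with [rho^2 = (1 - t(x + 1/x))^2 - 4 t^2 v^2].  Each of the two factors
   [1 - t(x + 1/x) -+ 2tv] splits as [(c - t/x)(1 - t x/c)] with [c] a root of
   [c^2 - (1 -+ 2tv) c + t^2], so [rho] is a product of square roots involving
   only [1/x] times square roots involving only [x].  In [S_0 sqrt(..x..) =
   B / sqrt(..1/x..)] the left side has only nonnegative and the right side only
   nonpositive powers of [x], so both equal their constant term 1.  Hence [B]
   is the product of the two square roots in [1/x], and counting by the last
   step gives [S (1 - t(x + 1/x + yv + v/y)) = B]. *)

From HB Require Import structures.
From mathcomp Require Import all_boot all_order all_algebra.
From mathcomp Require Import boolp.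
From mathcomp Require Import ring.
Set Implicit Arguments. Unset Strict Implicit. Unset Printing Implicit Defensive.
Import Order.TTheory GRing.Theory Num.Theory.
Local Open Scope ring_scope.

Section FpsRing.
Variable A : comNzRingType.

HB.instance Definition _ := gen_eqMixin (fps A).
HB.instance Definition _ := gen_choiceMixin (fps A).

Definition fps0 : fps A := fun _ => 0.
Definition fpsN (f : fps A) : fps A := fun n => - f n.
Definition fps1 : fps A := fun n => if n == 0%N then 1 else 0.

Lemma fps_addA : associative (@fps_add A).
Proof. by move=> f g h; apply: funext => n; rewrite /fps_add addrA. Qed.
Lemma fps_addC : commutative (@fps_add A).
Proof. by move=> f g; apply: funext => n; rewrite /fps_add addrC. Qed.
Lemma fps_add0 : left_id fps0 (@fps_add A).
Proof. by move=> f; apply: funext => n; rewrite /fps_add /fps0 add0r. Qed.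
Lemma fps_addN : left_inverse fps0 fpsN (@fps_add A).
Proof. by move=> f; apply: funext => n; rewrite /fps_add /fps0 /fpsN addNr. Qed.

HB.instance Definition _ := GRing.isNmodule.Build (fps A) fps_addA fps_addC fps_add0.
HB.instance Definition _ := GRing.Nmodule_isZmodule.Build (fps A) fps_addN.

Definition fps_trunc (N : nat) (f : fps A) : {poly A} := \poly_(i < N) f i.

Lemma fps_mul_trunc (f g : fps A) n N : (n < N)%N ->
  fps_mul f g n = (fps_trunc N f * fps_trunc N g)`_n.
Proof.
move=> ltnN; rewrite coefM /fps_mul; apply: eq_bigr => i _; rewrite !coef_poly.
have -> : (i < N)%N by apply: leq_ltn_trans ltnN; rewrite -ltnS.
by rewrite (leq_ltn_trans (leq_subr _ _) ltnN).
Qed.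

Lemma coef_fps_trunc N (f : fps A) n : (n < N)%N -> (fps_trunc N f)`_n = f n.
Proof. by move=> h; rewrite coef_poly h. Qed.

Lemma fps_mulA : associative (@fps_mul A).
Proof.
move=> f g h; apply: funext => n; set T := fps_trunc n.+1.
have -> : fps_mul (fps_mul f g) h n = (T f * T g * T h)`_n.
  rewrite coefM /fps_mul; apply: eq_bigr => i _; have lti := ltn_ord i.
  by rewrite coef_fps_trunc ?ltnS ?leq_subr // -(fps_mul_trunc _ _ lti).
have -> : fps_mul f (fps_mul g h) n = (T f * (T g * T h))`_n.
  rewrite coefM /fps_mul; apply: eq_bigr => i _.
  by rewrite coef_fps_trunc // -fps_mul_trunc ?ltnS ?leq_subr.
by rewrite mulrA.
Qed.

Lemma fps_mulC : commutative (@fps_mul A).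
Proof.
by move=> f g; apply: funext => n; rewrite !(fps_mul_trunc _ _ (ltnSn n)) mulrC.
Qed.

Lemma fps_mul1 : left_id fps1 (@fps_mul A).
Proof.
move=> f; apply: funext => n.
rewrite /fps_mul big_ord_recl /fps1 /= mul1r subn0 big1 ?addr0 // => i _.
by rewrite mul0r.
Qed.

Lemma fps_mulDl : left_distributive (@fps_mul A) (@fps_add A).
Proof.
move=> f g h; apply: funext => n; rewrite /fps_mul /fps_add -big_split.
by apply: eq_bigr => i _; rewrite mulrDl.
Qed.

Lemma fps1_neq0 : fps1 != fps0.
Proof. by apply/eqP => /(congr1 (fun f => f 0%N)) /eqP; rewrite oner_eq0. Qed.

HB.instance Definition _ := GRing.Zmodule_isComNzRing.Build (fps A)
  fps_mulA fps_mulC fps_mul1 fps_mulDl fps1_neq0.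

End FpsRing.

Section FpsTheory.
Variable A : comNzRingType.
Implicit Types (f g : fps A) (a b c : A).

Definition fpsC c : fps A := fun n => if n == 0%N then c else 0.
Definition fpsT : fps A := fun n => if n == 1%N then 1 else 0.

Lemma fpsE f g : (forall n, f n = g n) -> f = g.
Proof. exact: funext. Qed.

Lemma coef_fpsD f g n : (f + g) n = f n + g n. Proof. by []. Qed.
Lemma coef_fpsB f g n : (f - g) n = f n - g n. Proof. by []. Qed.
Lemma coef_fps1 n : (1 : fps A) n = if n == 0%N then 1 else 0. Proof. by []. Qed.
Lemma coef_fpsM f g n : (f * g) n = \sum_(i < n.+1) f i * g (n - i)%N.
Proof. by []. Qed.
Lemma fps_mulE f g : fps_mul f g = f * g. Proof. by []. Qed.
Lemma fps_addE f g : fps_add f g = f + g. Proof. by []. Qed.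

Lemma coef0_fpsM f g : (f * g) 0%N = f 0%N * g 0%N.
Proof. by rewrite coef_fpsM big_ord1. Qed.

Lemma coef0_fpsX f j : (f ^+ j) 0%N = f 0%N ^+ j.
Proof. by elim: j => [|j IH]; rewrite ?expr0 // !exprS coef0_fpsM IH. Qed.

Lemma coef_fpsCM c f n : (fpsC c * f) n = c * f n.
Proof.
rewrite coef_fpsM big_ord_recl /fpsC /= subn0 big1 ?addr0 // => i _.
by rewrite mul0r.
Qed.

Lemma coef_fpsTM f n : (fpsT * f) n = if n is m.+1 then f m else 0.
Proof.
case: n => [|m]; first by rewrite coef0_fpsM /fpsT mul0r.
rewrite coef_fpsM big_ord_recl /fpsT /= mul0r add0r big_ord_recl /= subSS.
by rewrite subn0 mul1r big1 ?addr0 // => i _; rewrite mul0r.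
Qed.

Lemma fpsC_is_nmod_morphism : nmod_morphism fpsC.
Proof.
split=> [|a b]; apply: fpsE => n; first by rewrite /fpsC; case: (n == 0%N).
by rewrite coef_fpsD /fpsC; case: (n == 0%N); rewrite ?addr0.
Qed.

Lemma fpsC_is_monoid_morphism : monoid_morphism fpsC.
Proof.
split=> // a b; apply: fpsE => n.
by rewrite coef_fpsCM /fpsC; case: (n == 0%N); rewrite ?mulr0.
Qed.

HB.instance Definition _ :=
  GRing.isNmodMorphism.Build A (fps A) fpsC fpsC_is_nmod_morphism.
HB.instance Definition _ :=
  GRing.isMonoidMorphism.Build A (fps A) fpsC fpsC_is_monoid_morphism.

Lemma fps_linE a b : fps_lin a b = fpsC a + fpsC b * fpsT.
Proof.
apply: fpsE => n; rewrite coef_fpsD mulrC coef_fpsTM /fps_lin /fpsC.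
by case: n => [|[|m]] //=; rewrite ?addr0 ?add0r.
Qed.

Lemma coef_fpsCTM c f n : (fpsC c * fpsT * f) n = if n is m.+1 then c * f m else 0.
Proof. by rewrite -mulrA coef_fpsCM coef_fpsTM; case: n; rewrite ?mulr0. Qed.

End FpsTheory.
Arguments fpsT {A}.

Section CausalFixpoint.
Variable A : comNzRingType.

Definition causal (Phi : fps A -> fps A) :=
  forall f g n, (forall i, (i < n)%N -> f i = g i) -> Phi f n = Phi g n.

Definition fixp (Phi : fps A -> fps A) : fps A := fun n => iter n.+1 Phi 0 n.

Variable Phi : fps A -> fps A.
Hypothesis Phi_causal : causal Phi.

Lemma iter_causal_stable m m' i : (i < m)%N -> (i < m')%N ->
  iter m Phi 0 i = iter m' Phi 0 i.
Proof.
elim: m m' i => [|m IH] [|m'] i //= lt_im lt_im'.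
by apply: Phi_causal => j lt_ji; apply: IH; apply: leq_trans lt_ji _.
Qed.

Lemma fixpE : fixp Phi = Phi (fixp Phi).
Proof.
apply: funext => n; apply: Phi_causal => i lt_in.
by rewrite /fixp (iter_causal_stable (m' := n) (ltnSn i)).
Qed.

End CausalFixpoint.

Section InverseSqrt.
Variable A : comNzRingType.
Implicit Types (f g : fps A) (a ia ib : A).

(* [ia] is an inverse of [f 0]. *)
Definition fps_invPhi f ia (g : fps A) : fps A := fun n =>
  if n is m.+1 then - ia * \sum_(i < m.+1) f i.+1 * g (m - i)%N else ia.

Definition fps_inv f ia := fixp (fps_invPhi f ia).

Lemma fps_invPhi_causal f ia : causal (fps_invPhi f ia).
Proof.
move=> g1 g2 [|m] eq_g //=; congr (_ * _); apply: eq_bigr => i _.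
by rewrite eq_g // ltnS leq_subr.
Qed.

Lemma fps_mulV f ia : f 0%N * ia = 1 -> f * fps_inv f ia = 1.
Proof.
move=> fia; have E := fixpE (fps_invPhi_causal f ia).
apply: fpsE => -[|m]; rewrite coef_fpsM coef_fps1.
  by rewrite big_ord1 /fps_inv E /= fia.
by rewrite big_ord_recl /= subn0 /fps_inv {1}E /= mulrA mulrN fia mulN1r addNr.
Qed.

(* [a] is the constant term, [ib] an inverse of [2 a]. *)
Definition fps_sqrtPhi f a ib (r : fps A) : fps A := fun n =>
  if n is m.+1 then ib * (f m.+1 - \sum_(i < m) r i.+1 * r (m - i)%N) else a.

Definition fps_sqrt f a ib := fixp (fps_sqrtPhi f a ib).

Lemma fps_sqrtPhi_causal f a ib : causal (fps_sqrtPhi f a ib).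
Proof.
move=> g1 g2 [|m] eq_g //=; congr (_ * (_ - _)); apply: eq_bigr => i _.
by rewrite !eq_g // ltnS ?leq_subr.
Qed.

Lemma fps_sqrt0 f a ib : fps_sqrt f a ib 0%N = a.
Proof. by rewrite /fps_sqrt fixpE //; apply: fps_sqrtPhi_causal. Qed.

Lemma fps_sqrtP f a ib : a * a = f 0%N -> (a *+ 2) * ib = 1 ->
  fps_sqrt f a ib * fps_sqrt f a ib = f.
Proof.
move=> a2 a2ib; have E := fixpE (fps_sqrtPhi_causal f a ib).
have r0 := fps_sqrt0 f a ib; set r := fps_sqrt f a ib in E r0 *.
apply: fpsE => -[|m]; rewrite coef_fpsM; first by rewrite big_ord1 r0.
rewrite big_ord_recl big_ord_recr /= subn0 subnn r0.
set S := \sum_(i < m) _.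
have -> : S = \sum_(i < m) r i.+1 * r (m - i)%N.
  by apply: eq_bigr => i _; rewrite /bump /= add1n subSS.
have -> : r (bump 0 m) = ib * (f m.+1 - \sum_(i < m) r i.+1 * r (m - i)%N).
  by rewrite /r /fps_sqrt {1}E.
set S' := \sum_(i < m) _.
have -> : a * (ib * (f m.+1 - S')) + (S' + ib * (f m.+1 - S') * a)
   = (a *+ 2 * ib) * (f m.+1 - S') + S' by rewrite mulr2n; ring.
by rewrite a2ib mul1r subrK.
Qed.

End InverseSqrt.

Section FpsMap.
Variables (A B : comNzRingType) (phi : {rmorphism A -> B}).

Definition fps_map (f : fps A) : fps B := fun n => phi (f n).

Lemma fps_map_is_nmod_morphism : nmod_morphism fps_map.
Proof.
by split=> [|f g]; apply: fpsE => n; rewrite /fps_map ?raddf0 ?coef_fpsD ?rmorphD.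
Qed.

Lemma fps_map_is_monoid_morphism : monoid_morphism fps_map.
Proof.
split=> [|f g]; apply: fpsE => n; rewrite /fps_map.
  by rewrite !coef_fps1; case: (n == 0%N); rewrite ?rmorph1 ?rmorph0.
by rewrite !coef_fpsM rmorph_sum; apply: eq_bigr => i _; rewrite rmorphM.
Qed.

HB.instance Definition _ :=
  GRing.isNmodMorphism.Build (fps A) (fps B) fps_map fps_map_is_nmod_morphism.
HB.instance Definition _ :=
  GRing.isMonoidMorphism.Build (fps A) (fps B) fps_map fps_map_is_monoid_morphism.

Lemma fps_mapC c : fps_map (fpsC c) = fpsC (phi c).
Proof. by apply: fpsE => n; rewrite /fps_map /fpsC; case: (n == 0%N); rewrite ?rmorph0. Qed.

Lemma fps_mapT : fps_map fpsT = fpsT.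
Proof.
by apply: fpsE => n; rewrite /fps_map /fpsT; case: (n == 1%N); rewrite ?rmorph0 ?rmorph1.
Qed.

End FpsMap.

Lemma fps_map_hornerC (R : comNzRingType) (z : R) (f : fps R) :
  fps_map (horner_eval z) (fps_map polyC f) = f.
Proof. by apply: fpsE => n; rewrite /fps_map /= horner_evalE hornerC. Qed.

Section Walks.
Implicit Types (w : seq 'I_4) (s : 'I_4).

Lemma posx_rcons w s : posx (rcons w s) = posx w + (step s).1.
Proof. by rewrite /posx -cats1 big_cat big_seq1. Qed.
Lemma posy_rcons w s : posy (rcons w s) = posy w + (step s).2.
Proof. by rewrite /posy -cats1 big_cat big_seq1. Qed.
Lemma vert_rcons w s : vert (rcons w s) = (vert w + (2 <= val s))%N.
Proof. by rewrite /vert -cats1 count_cat /= addn0. Qed.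

Lemma slit_walk_rcons w s :
  slit_walk (rcons w s) = slit_walk w && ~~ inH (rcons w s).
Proof.
rewrite /slit_walk size_rcons -[(size w).+1]addn1 iotaD all_cat /= andbT add1n.
congr (_ && _); last by rewrite -[in LHS](size_rcons w s) take_size.
apply: eq_in_all => m; rewrite mem_iota => /andP[_ hm].
by rewrite -cats1 takel_cat // -ltnS -[(size w).+1]add1n.
Qed.

Lemma inH_posx w : inH w -> posx w <= 0.
Proof. by case/andP. Qed.
Lemma inH_posy w : inH w -> posy w = 0.
Proof. by case/andP => /eqP. Qed.

Lemma slit_walk_posx_gt0 w : slit_walk w -> posy w = 0 -> (0 < size w)%N ->
  0 < posx w.
Proof.
move=> /allP slit_w w_y0 w_gt0; have := slit_w (size w).
by rewrite mem_iota add1n ltnSn w_gt0 take_size /inH w_y0 eqxx -ltNge => ->.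
Qed.

Lemma slit_walk_posx_ge0 w : slit_walk w -> posy w = 0 -> 0 <= posx w.
Proof.
move=> slit_w w_y0; case: (posnP (size w)) => [/size0nil -> | w_gt0].
  by rewrite /posx big_nil.
exact/ltW/slit_walk_posx_gt0.
Qed.

Variable V : zmodType.

Lemma sum_tuple_rcons n (G : seq 'I_4 -> V) :
  \sum_(t : n.+1.-tuple 'I_4) G t =
  \sum_(t : n.-tuple 'I_4) \sum_(s : 'I_4) G (rcons t s).
Proof.
rewrite pair_big /=.
pose f (p : n.-tuple 'I_4 * 'I_4) := [tuple of rcons p.1 p.2].
pose g (t : n.+1.-tuple 'I_4) :=
  ([tuple of belast (thead t) (behead t)] : n.-tuple 'I_4,
   last (thead t) (behead t)).
have gK : cancel g f.
  by move=> t; apply: val_inj; case: t => [[|a l] ?] //=; rewrite -lastI.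
have fK : cancel f g.
  move=> [t s]; have := gK (f (t, s)).
  case: (g (f (t, s))) => t' s' /(congr1 val) /= /rcons_inj [t't ->].
  by congr (_, _); apply: val_inj.
by rewrite (reindex f) //; exists g => p _.
Qed.

Lemma sum_slit_walks0 (F : seq 'I_4 -> V) :
  \sum_(w : 0.-tuple 'I_4 | slit_walk w) F w = F [::].
Proof.
rewrite (eq_bigl (pred1 [tuple])) ?big_pred1_eq // => t.
by rewrite tuple0 /= eqxx.
Qed.

Lemma sum_slit_walksS n (F : seq 'I_4 -> V) :
  \sum_(w : n.+1.-tuple 'I_4 | slit_walk w) F w =
  \sum_(w : n.-tuple 'I_4 | slit_walk w) \sum_(s : 'I_4) F (rcons w s)
  - \sum_(w : n.-tuple 'I_4 | slit_walk w)
     \sum_(s : 'I_4 | inH (rcons w s)) F (rcons w s).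
Proof.
rewrite big_mkcond (sum_tuple_rcons n (fun t => if slit_walk t then F t else 0)).
rewrite [in RHS]big_mkcond [X in _ - X]big_mkcond -sumrB.
apply: eq_big => // w _; case slit_w: (slit_walk w); last first.
  by rewrite subrr; apply: big1 => s _; rewrite slit_walk_rcons slit_w.
rewrite [X in X - _](bigID (fun s => inH (rcons w s))) /= addrC addrK.
by rewrite [RHS]big_mkcond; apply: eq_bigr => s _; rewrite slit_walk_rcons slit_w.
Qed.

End Walks.

Lemma if_natrM (R : nzSemiRingType) (b : bool) (e : R) :
  (if b then e else 0) = b%:R * e.
Proof. by case: b; rewrite ?mul1r ?mul0r. Qed.

Lemma exprz_N1 (R : unitRingType) (z : R) : z ^ (-1) = z^-1.
Proof. by rewrite -exprz_inv expr1z. Qed.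

Section HeightSeries.
Variables (R : fieldType) (x v : R).
Hypothesis x_neq0 : x != 0.

Definition wt (w : seq 'I_4) : R := x ^ posx w * v ^+ vert w.

Definition height_gf (j : int) : fps R := fun n =>
  \sum_(w : n.-tuple 'I_4 | slit_walk w && (posy w == j)) wt w.

Definition boundary_gf : fps R := fun n =>
  if n is m.+1 then
    - \sum_(w : m.-tuple 'I_4 | slit_walk w)
         \sum_(s : 'I_4 | inH (rcons w s)) wt (rcons w s)
  else 1.

Definition U : fps R := fpsC (x + x^-1) * fpsT.
Definition V : fps R := fpsC v * fpsT.

Lemma wt_rcons w s :
  wt (rcons w s) = wt w * (x ^ (step s).1 * v ^+ (2 <= val s)).
Proof. by rewrite /wt posx_rcons vert_rcons expfzDr // exprD; ring. Qed.

Lemma sum_steps_height w j :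
  \sum_(s : 'I_4) (if posy (rcons w s) == j then wt (rcons w s) else 0) =
  wt w * ((posy w == j)%:R * (x + x^-1) + (posy w == j - 1)%:R * v
          + (posy w == j + 1)%:R * v).
Proof.
have eq_sub (a b c : int) : (a + b == c) = (a == c - b).
  exact: (can2_eq (addrK b) (subrK b)).
rewrite !big_ord_recl big_ord0 /= !posy_rcons !wt_rcons /step /=.
by rewrite !eq_sub !subr0 opprK exprz_N1 expr1z !if_natrM; ring.
Qed.

Lemma height_gf_0 j : height_gf j 0%N = (j == 0)%:R.
Proof.
rewrite /height_gf big_mkcondr.
rewrite (sum_slit_walks0 (fun w => if posy w == j then wt w else 0)) /=.
by rewrite /posy big_nil eq_sym if_natrM /wt /posx big_nil expr0z mul1r mulr1.
Qed.

Lemma height_gf_S j n : height_gf j n.+1 =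
  (x + x^-1) * height_gf j n + v * (height_gf (j - 1) n + height_gf (j + 1) n)
  + (j == 0)%:R * boundary_gf n.+1.
Proof.
rewrite /height_gf big_mkcondr.
rewrite (sum_slit_walksS n (fun w => if posy w == j then wt w else 0)) /=.
under eq_bigr do rewrite sum_steps_height.
set B := \sum_(w : n.-tuple 'I_4 | slit_walk w) \sum_(s : 'I_4 | inH (rcons w s)) _.
have -> : B = (j == 0)%:R * \sum_(w : n.-tuple 'I_4 | slit_walk w)
     \sum_(s : 'I_4 | inH (rcons w s)) wt (rcons w s).
  rewrite mulr_sumr; apply: eq_big => // w _.
  rewrite mulr_sumr; apply: eq_big => // s land_s.
  by rewrite (inH_posy land_s) eq_sym if_natrM.
rewrite mulrN; congr (_ - _).
rewrite !big_mkcondr -big_split !mulr_sumr -!big_split /=.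
by apply: eq_big => // w _; rewrite !if_natrM; ring.
Qed.

Lemma height_gfE j : height_gf j =
  U * height_gf j + V * (height_gf (j - 1) + height_gf (j + 1))
  + fpsC (j == 0)%:R * boundary_gf.
Proof.
apply: fpsE => -[|n]; rewrite !coef_fpsD /U /V !coef_fpsCTM coef_fpsCM.
  by rewrite height_gf_0 !add0r /boundary_gf mulr1.
by rewrite height_gf_S.
Qed.

Lemma height_gfE_sym j (e : int) : e ^+ 2 = 1 -> height_gf j =
  U * height_gf j + V * (height_gf (j - e) + height_gf (j + e))
  + fpsC (j == 0)%:R * boundary_gf.
Proof.
move=> /eqP; rewrite sqrf_eq1 => /orP[] /eqP ->; first exact: height_gfE.
by rewrite opprK [height_gf (j + 1) + _]addrC; apply: height_gfE.
Qed.

(* coefficient recursion of [beta = U beta + V (1 + beta^2)] *)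
Definition betaPhi (b : fps R) : fps R := fun n =>
  if n is m.+1 then (x + x^-1) * b m + v * (1 + b * b) m else 0.

Definition beta := fixp betaPhi.

Lemma betaPhi_causal : causal betaPhi.
Proof.
move=> f g [|m] eq_fg //=; rewrite !coef_fpsD !coef_fpsM eq_fg //.
congr (_ + _ * (_ + _)); apply: eq_bigr => i _.
by rewrite !eq_fg // ltnS ?leq_subr // -ltnS.
Qed.

Lemma betaE : beta = U * beta + V * (1 + beta * beta).
Proof.
have E := fixpE betaPhi_causal; rewrite -/beta in E.
apply: fpsE => -[|n]; rewrite coef_fpsD /U /V !coef_fpsCTM {1}E //.
by rewrite addr0.
Qed.

Lemma beta_0 : beta 0%N = 0.
Proof. by rewrite /beta fixpE //; apply: betaPhi_causal. Qed.

Lemma height_recurrence_eq0 (D : nat -> fps R) :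
  (forall j, D j 0%N = 0) -> D 0%N = 0 ->
  (forall j, D j.+1 = U * D j.+1 + V * (D j + D j.+2)) -> forall j, D j = 0.
Proof.
move=> D_0 D0 D_rec.
suff H n j : D j n = 0 by move=> j; apply: fpsE => n; rewrite H.
elim: n j => [|n IH] j; first exact: D_0.
case: j => [|j]; first by rewrite D0.
by rewrite D_rec coef_fpsD /U /V !coef_fpsCTM coef_fpsD !IH !(mulr0, addr0).
Qed.

(* Both sides solve the recurrence of [height_recurrence_eq0] in [j]. *)
Lemma height_gf_beta (e : int) (j : nat) : e ^+ 2 = 1 ->
  height_gf (e * j%:Z) = height_gf 0 * beta ^+ j.
Proof.
move=> e2; pose D (j : nat) := height_gf (e * j%:Z) - height_gf 0 * beta ^+ j.
suff /(_ j)/eqP : forall j, D j = 0 by rewrite subr_eq0 => /eqP.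
have e_neq0 : e != 0 by apply: contra_eq_neq e2 => ->; rewrite expr0n.
apply: height_recurrence_eq0 => [k||k].
- rewrite /D coef_fpsB coef0_fpsM coef0_fpsX beta_0 !height_gf_0 expr0n eqxx.
  by rewrite mul1r mulf_eq0 (negPf e_neq0) subrr.
- by rewrite /D mulr0 expr0 mulr1 subrr.
have E := height_gfE_sym (e * k.+1%:Z) e2.
rewrite mulf_eq0 (negPf e_neq0) /= rmorph0 mul0r addr0 in E.
have eB : e * k.+1%:Z - e = e * k%:Z by rewrite -addn1 PoszD; ring.
have eD : e * k.+1%:Z + e = e * k.+2%:Z by rewrite -[k.+2]addn2 -[k.+1]addn1 !PoszD; ring.
rewrite eB eD in E.
(* the error term vanishes by the equation of [beta] *)
have Y : height_gf 0 * beta ^+ k.+1 = U * (height_gf 0 * beta ^+ k.+1)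
   + V * (height_gf 0 * beta ^+ k + height_gf 0 * beta ^+ k.+2)
   + height_gf 0 * beta ^+ k * (beta - (U * beta + V * (1 + beta * beta))).
  by rewrite !exprS; ring.
rewrite -betaE subrr mulr0 addr0 in Y.
by rewrite /D {1}E {1}Y; ring.
Qed.

Definition rho : fps R := 1 - U - 2%:R * V * beta.

Lemma boundary_gf_rho : boundary_gf = height_gf 0 * rho.
Proof.
have E := height_gfE 0; rewrite eqxx /= rmorph1 mul1r sub0r add0r in E.
have E1 := @height_gf_beta 1 1 (expr1n _ _).
have E2 := @height_gf_beta (-1) 1 (sqrr_sign _ 1).
rewrite mul1r in E1; rewrite mulN1r in E2.
rewrite E1 E2 expr1 in E.
have -> : boundary_gf = height_gf 0 - (U * height_gf 0
   + V * (height_gf 0 * beta + height_gf 0 * beta)) by rewrite {1}E; ring.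
by rewrite /rho; ring.
Qed.

Lemma rho_sqr : rho * rho = (1 - U) ^+ 2 - 4%:R * V ^+ 2.
Proof.
have -> : rho * rho = (1 - U) ^+ 2 - 4%:R * V ^+ 2
   + 4%:R * V * (U * beta + V * (1 + beta * beta) - beta) by rewrite /rho; ring.
by rewrite -betaE subrr mulr0 addr0.
Qed.

Lemma rho_0 : rho 0%N = 1.
Proof.
by rewrite /rho !coef_fpsB /U /V -!mulrA !coef_fpsCM !coef0_fpsM !mul0r !mulr0 !subr0.
Qed.

End HeightSeries.

Section SlitPlaneSeries.
Variables (R : fieldType) (x y v : R).
Hypotheses (x_neq0 : x != 0) (y_neq0 : y != 0).

Definition wt_xy (w : seq 'I_4) : R := x ^ posx w * y ^ posy w * v ^+ vert w.

Lemma sum_steps_wt_xy w : \sum_(s : 'I_4) wt_xy (rcons w s) =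
  wt_xy w * (x + x^-1 + y * v + y^-1 * v).
Proof.
rewrite !big_ord_recl big_ord0 /wt_xy /= !posx_rcons !posy_rcons !vert_rcons.
by rewrite !expfzDr // /step /= !exprz_N1 !expr1z !expr0z !exprD; ring.
Qed.

Lemma wt_xy_inH w : inH w -> wt_xy w = wt x v w.
Proof. by move=> land_w; rewrite /wt_xy /wt (inH_posy land_w) expr0z mulr1. Qed.

Lemma S_gf_0 : S_gf x y v 0%N = 1.
Proof.
rewrite /S_gf (sum_slit_walks0 wt_xy).
by rewrite /wt_xy /posx /posy !big_nil /= !expr0z expr0 !mulr1.
Qed.

Lemma S_gf_S n : S_gf x y v n.+1 =
  (x + x^-1 + y * v + y^-1 * v) * S_gf x y v n + boundary_gf x v n.+1.
Proof.
rewrite /S_gf (sum_slit_walksS n wt_xy) /boundary_gf mulr_sumr.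
congr (_ - _); first by apply: eq_big => // w _; rewrite sum_steps_wt_xy mulrC.
by apply: eq_big => // w _; apply: eq_big => // s /wt_xy_inH.
Qed.

Lemma S_gf_denom : fps_mul (S_gf x y v) (denom x y v) = 2%:R * boundary_gf x v.
Proof.
rewrite fps_mulE /denom fps_linE -(rmorph_nat (@fpsC R)).
set c := x + x^-1 + y * v + y^-1 * v.
have -> : S_gf x y v * (fpsC 2 + fpsC (- (2 * c)) * fpsT)
   = fpsC 2 * S_gf x y v + fpsC (- (2 * c)) * (fpsT * S_gf x y v) by ring.
apply: fpsE => -[|n]; rewrite coef_fpsD !coef_fpsCM coef_fpsTM.
  by rewrite S_gf_0 mulr0 addr0 /boundary_gf mulr1.
by rewrite S_gf_S -/c; ring.
Qed.

End SlitPlaneSeries.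

Section PolyConst.
Variable R : numFieldType.
Implicit Types p q : {poly R}.

Lemma poly_eq0_nonzero_roots p : (forall z, z != 0 -> root p z) -> p = 0.
Proof.
move=> p_root; apply: (@roots_geq_poly_eq0 _ p [seq i.+1%:R | i <- iota 0 (size p)]).
- by apply/allP => _ /mapP[i _ ->]; apply: p_root; rewrite pnatr_eq0.
- by rewrite map_inj_uniq ?iota_uniq // => i j /eqP; rewrite eqr_nat => /eqP [].
- by rewrite size_map size_iota.
Qed.

Definition poly_recip q : {poly R} :=
  \sum_(i < size q) q`_i *: 'X^(size q - i).

Lemma horner_poly_recip q z : z != 0 ->
  (poly_recip q).[z] = z ^+ size q * q.[z^-1].
Proof.
move=> z_neq0; rewrite horner_sum horner_coef mulr_sumr.
apply: eq_bigr => i _; rewrite hornerZ hornerXn exprB ?unitfE ?(ltnW (ltn_ord i)) //.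
by rewrite exprVn mulrCA.
Qed.

Lemma poly_horner_inv_const p q :
  (forall z, z != 0 -> p.[z] = q.[z^-1]) -> p = (p.[0])%:P.
Proof.
move=> pq; set d := size q.
have pXd : p * 'X^d = poly_recip q.
  apply/eqP; rewrite -subr_eq0; apply/eqP/poly_eq0_nonzero_roots => z z_neq0.
  by rewrite /root !hornerE horner_poly_recip // pq // mulrC subrr.
apply/polyP => -[|k]; first by rewrite coefC horner_coef0.
have := congr1 (fun s : {poly R} => s`_(k.+1 + d)%N) pXd; rewrite /= coefMXn.
rewrite ltnNge leq_addl /= addnK coefC => ->.
rewrite coef_sum big1 // => i _; rewrite coefZ coefXn.
by rewrite gtn_eqF ?mulr0 // (leq_ltn_trans (leq_subr _ _)) // addSn ltnS leq_addl.
Qed.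

End PolyConst.

Section PolySeries.
Variables (R : fieldType) (v : R).

(* [height_gf z v 0] and [boundary_gf z v] with the variable [z], resp. [1/z],
   kept formal: their coefficients are polynomials. *)
Definition height0_polys : fps {poly R} := fun n =>
  \sum_(w : n.-tuple 'I_4 | slit_walk w && (posy w == 0))
     'X^(absz (posx w)) * (v ^+ vert w)%:P.

Definition boundary_polys : fps {poly R} := fun n =>
  if n is m.+1 then
    - \sum_(w : m.-tuple 'I_4 | slit_walk w)
         \sum_(s : 'I_4 | inH (rcons w s))
            'X^(absz (posx (rcons w s))) * (v ^+ vert (rcons w s))%:P
  else 1.

Local Notation ev z := (fps_map (horner_eval z)).

Lemma height0_polys_ev z : ev z height0_polys = height_gf z v 0.
Proof.
apply: fpsE => n; rewrite /fps_map /height0_polys /height_gf /= horner_evalE horner_sum.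
apply: eq_bigr => w /andP[slit_w /eqP w_y0].
by rewrite hornerM hornerXn hornerC /wt -{2}(gez0_abs (slit_walk_posx_ge0 slit_w w_y0)).
Qed.

Lemma height0_polys_ev0 : ev 0 height0_polys = 1.
Proof.
apply: fpsE => -[|n]; rewrite /fps_map /height0_polys /= horner_evalE horner_sum.
  rewrite big_mkcondr (sum_slit_walks0 (fun w => if posy w == 0 then
      ('X^(absz (posx w)) * (v ^+ vert w)%:P).[0] else 0)) /=.
  by rewrite /posy /posx !big_nil /= hornerM hornerC mulr1.
apply: big1 => w /andP[slit_w /eqP w_y0].
have := slit_walk_posx_gt0 slit_w w_y0; rewrite size_tuple => /(_ isT) w_x_gt0.
by rewrite hornerM hornerXn expr0n absz_eq0 gt_eqF // mul0r.
Qed.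

Lemma boundary_polys_ev z : z != 0 -> ev z^-1 boundary_polys = boundary_gf z v.
Proof.
move=> z_neq0; apply: fpsE => -[|n]; rewrite /fps_map /boundary_polys /boundary_gf /=.
  by rewrite horner_evalE hornerC.
rewrite horner_evalE hornerN horner_sum; congr (- _); apply: eq_bigr => w _.
rewrite horner_sum; apply: eq_bigr => s /inH_posx w_x_le0.
by rewrite hornerM hornerXn hornerC /wt exprnP exprz_inv (lez0_abs w_x_le0) opprK.
Qed.

End PolySeries.

Section FpsSqrtUnique.
Variable R : numFieldType.
Implicit Types a b f r : fps R.

Lemma eq_fps_sqr a b : a * a = b * b -> 0 < a 0%N -> 0 < b 0%N -> a = b.
Proof.
move=> ab a0 b0; have apb : (a + b) 0%N * ((a + b) 0%N)^-1 = 1.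
  by rewrite mulfV // coef_fpsD gt_eqF // addr_gt0.
have /(congr1 (fun f => (a - b) * f)) := fps_mulV apb.
have -> : (a - b) * ((a + b) * fps_inv (a + b) ((a + b) 0%N)^-1)
  = (a * a - b * b) * fps_inv (a + b) ((a + b) 0%N)^-1 by ring.
by rewrite ab subrr mul0r mulr1 => /eqP; rewrite eq_sym subr_eq0 => /eqP.
Qed.

Lemma is_fps_sqrt_0 f r : is_fps_sqrt f r -> f 0%N = 1 -> r 0%N = 1.
Proof.
case=> rr r0_gt0 f0; have /eqP : r 0%N ^+ 2 = 1 by rewrite expr2 -coef0_fpsM -fps_mulE rr.
by rewrite sqrf_eq1 => /orP[/eqP // | /eqP r0]; move: r0_gt0; rewrite r0 oppr_gt0 ltr10.
Qed.

End FpsSqrtUnique.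

Lemma fpsC_invn2 (R : numFieldType) : fpsC (2^-1 : R) * 2%:R = 1.
Proof. by rewrite -(rmorph_nat (@fpsC R)) -rmorphM mulVf ?rmorph1 // pnatr_eq0. Qed.

Lemma fps_sqrt_exists (R : rcfType) (f : fps R) : 0 < f 0%N ->
  exists r, is_fps_sqrt f r.
Proof.
move=> f0_gt0; set a := Num.sqrt (f 0%N); have a_gt0 : 0 < a by rewrite sqrtr_gt0.
exists (fps_sqrt f a (a *+ 2)^-1); split; last by rewrite fps_sqrt0.
rewrite fps_mulE fps_sqrtP; first by [].
  by rewrite -expr2 sqr_sqrtr // ltW.
by rewrite mulfV // gt_eqF // pmulrn_lgt0.
Qed.

Section QuadraticFactor.
Variables (R : numFieldType) (e r : fps R).
Hypotheses (e_0 : e 0%N = 1) (r_0 : r 0%N = 1).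
Hypothesis r_sqr : r * r = e ^+ 2 - 4%:R * fpsT ^+ 2.

Local Notation T := (@fpsT R).
Local Notation ev z := (fps_map (horner_eval z)).
Local Notation lift := (fps_map (@polyC R)).
Local Notation sqrt1 f := (fps_sqrt f 1 (2^-1)%:P).

(* the root of [c^2 - e c + t^2 = 0] with constant term 1 *)
Definition qroot : fps R := fpsC 2^-1 * (e + r).
Definition qroot_inv : fps R := fps_inv qroot 1.

Lemma qroot_0 : qroot 0%N = 1.
Proof. by rewrite /qroot coef_fpsCM coef_fpsD e_0 r_0 mulVf // pnatr_eq0. Qed.

Lemma qroot_mulV : qroot * qroot_inv = 1.
Proof. by apply: fps_mulV; rewrite qroot_0 mulr1. Qed.

Lemma qroot_eq : qroot ^+ 2 - e * qroot + T ^+ 2 = 0.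
Proof.
have -> : qroot ^+ 2 - e * qroot + T ^+ 2 =
  (fpsC 2^-1) ^+ 2 * (r * r - (e ^+ 2 - 4%:R * T ^+ 2))
  + T ^+ 2 * (1 - (fpsC 2^-1 * 2%:R) ^+ 2)
  + (fpsC 2^-1 * 2%:R - 1) * (fpsC 2^-1 * e * (e + r)) by rewrite /qroot; ring.
by rewrite r_sqr fpsC_invn2 expr1n !subrr !mulr0 mul0r !addr0.
Qed.

Lemma qroot_factor z : z != 0 ->
  (qroot - T * fpsC z^-1) * (1 - T * qroot_inv * fpsC z)
  = e - fpsC (z + z^-1) * T.
Proof.
move=> z_neq0; have zz : fpsC z * fpsC z^-1 = 1 by rewrite -rmorphM mulfV ?rmorph1.
have E : (qroot - T * fpsC z^-1) * (1 - T * qroot_inv * fpsC z)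
  - (e - fpsC (z + z^-1) * T) =
  T * fpsC z * (1 - qroot * qroot_inv) + T ^+ 2 * qroot_inv * (fpsC z * fpsC z^-1 - 1)
  + qroot_inv * (qroot ^+ 2 - e * qroot + T ^+ 2)
  + (qroot - e) * (1 - qroot * qroot_inv) by rewrite rmorphD; ring.
by apply/eqP; rewrite -subr_eq0 E zz qroot_mulV qroot_eq !subrr !mulr0 !addr0.
Qed.

Lemma sqrt1P (f : fps {poly R}) : f 0%N = 1 -> sqrt1 f * sqrt1 f = f.
Proof.
move=> f0; apply: fps_sqrtP; first by rewrite mulr1 f0.
by rewrite -(rmorph_nat (@polyC R)) -polyCM mulfV ?pnatr_eq0.
Qed.

Definition s_polys := sqrt1 (lift qroot - fpsT * fpsC 'X).
Definition t_polys := sqrt1 (1 - fpsT * lift qroot_inv * fpsC 'X).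

Lemma s_polys_ev z : ev z s_polys * ev z s_polys = qroot - T * fpsC z.
Proof.
rewrite -rmorphM sqrt1P; last by rewrite coef_fpsB coef0_fpsM mul0r subr0 /fps_map qroot_0.
rewrite rmorphB (rmorphM _ fpsT) /= fps_mapT fps_mapC fps_map_hornerC.
by rewrite /= horner_evalE hornerX.
Qed.

Lemma t_polys_ev z : ev z t_polys * ev z t_polys = 1 - T * qroot_inv * fpsC z.
Proof.
rewrite -rmorphM sqrt1P; last by rewrite coef_fpsB !coef0_fpsM !mul0r subr0.
rewrite rmorphB rmorph1 !rmorphM /= fps_mapT fps_mapC fps_map_hornerC.
by rewrite /= horner_evalE hornerX.
Qed.

Lemma sqrt1_ev_0 (f : fps {poly R}) z : ev z (sqrt1 f) 0%N = 1.
Proof. by rewrite /fps_map fps_sqrt0 /= horner_evalE hornerC. Qed.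

Lemma t_polys_ev0 : ev 0 t_polys = 1.
Proof.
apply: eq_fps_sqr; rewrite ?sqrt1_ev_0 ?ltr01 // t_polys_ev.
by rewrite rmorph0 !mulr0 subr0 mulr1.
Qed.

Lemma qroot_factor_sqr z : z != 0 ->
  (ev z^-1 s_polys * ev z t_polys) ^+ 2 = e - fpsC (z + z^-1) * T.
Proof.
move=> z_neq0; rewrite -qroot_factor // -t_polys_ev -(invrK z) -s_polys_ev invrK.
by rewrite expr2; ring.
Qed.

End QuadraticFactor.

Section SlitKernelFactor.
Variables (R : numFieldType) (v : R) (r1 r2 : fps R).
Hypotheses (r1_sqrt : is_fps_sqrt (delta1 v) r1) (r2_sqrt : is_fps_sqrt (delta2 v) r2).

Local Notation T := (@fpsT R).
Local Notation ev z := (fps_map (horner_eval z)).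

Definition e1 : fps R := 1 - 2%:R * (fpsC v * T).
Definition e2 : fps R := 1 + 2%:R * (fpsC v * T).

Lemma delta1E : delta1 v = e1 ^+ 2 - 4%:R * T ^+ 2.
Proof.
rewrite /delta1 /e1 fps_mulE !fps_linE !rmorphN !rmorphM !rmorphD !rmorph1.
by rewrite /= ?rmorphN; ring.
Qed.

Lemma delta2E : delta2 v = e2 ^+ 2 - 4%:R * T ^+ 2.
Proof.
rewrite /delta2 /e2 fps_mulE !fps_linE !rmorphN !rmorphM !rmorphB !rmorph1.
by rewrite /= ?rmorphN; ring.
Qed.

Lemma e1_0 : e1 0%N = 1.
Proof. by rewrite /e1 coef_fpsB !coef0_fpsM /fpsT /= !mulr0 subr0. Qed.
Lemma e2_0 : e2 0%N = 1.
Proof. by rewrite /e2 coef_fpsD !coef0_fpsM /fpsT /= !mulr0 addr0. Qed.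

Lemma delta_0 (e : fps R) : e 0%N = 1 -> (e ^+ 2 - 4%:R * T ^+ 2) 0%N = 1.
Proof.
by move=> e0; rewrite coef_fpsB coef0_fpsM !coef0_fpsX e0 expr1n /fpsT /= expr2 !mulr0 subr0.
Qed.

Lemma r1_0 : r1 0%N = 1.
Proof. by apply: is_fps_sqrt_0 r1_sqrt _; rewrite delta1E delta_0 // e1_0. Qed.
Lemma r2_0 : r2 0%N = 1.
Proof. by apply: is_fps_sqrt_0 r2_sqrt _; rewrite delta2E delta_0 // e2_0. Qed.

Lemma r1_sqr : r1 * r1 = e1 ^+ 2 - 4%:R * T ^+ 2.
Proof. by case: r1_sqrt; rewrite delta1E. Qed.
Lemma r2_sqr : r2 * r2 = e2 ^+ 2 - 4%:R * T ^+ 2.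
Proof. by case: r2_sqrt; rewrite delta2E. Qed.

Local Notation s1 := (s_polys e1 r1).
Local Notation t1 := (t_polys e1 r1).
Local Notation s2 := (s_polys e2 r2).
Local Notation t2 := (t_polys e2 r2).

Lemma rho_factor z : z != 0 ->
  rho z v = ev z^-1 s1 * ev z t1 * (ev z^-1 s2 * ev z t2).
Proof.
move=> z_neq0; apply: eq_fps_sqr; last 2 first.
- by rewrite rho_0 ltr01.
- by rewrite !coef0_fpsM !sqrt1_ev_0 !mulr1 ltr01.
rewrite rho_sqr /U /V.
have -> : (1 - fpsC (z + z^-1) * T) ^+ 2 - 4%:R * (fpsC v * T) ^+ 2
  = (e1 - fpsC (z + z^-1) * T) * (e2 - fpsC (z + z^-1) * T) by rewrite /e1 /e2; ring.
rewrite -(qroot_factor_sqr e1_0 r1_0 r1_sqr z_neq0).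
rewrite -(qroot_factor_sqr e2_0 r2_0 r2_sqr z_neq0).
by rewrite !expr2; ring.
Qed.

(* The left side has only nonnegative powers of [z], the right side only
   nonpositive ones (Wiener-Hopf splitting of the kernel). *)
Lemma height0_t_polys_ev z : z != 0 ->
  ev z (height0_polys v * t1 * t2)
  = ev z^-1 (boundary_polys v * fps_inv s1 1 * fps_inv s2 1).
Proof.
move=> z_neq0; rewrite !rmorphM /= height0_polys_ev boundary_polys_ev //.
have sK (s : fps {poly R}) : s 0%N = 1 -> ev z^-1 s * ev z^-1 (fps_inv s 1) = 1.
  by move=> s0; rewrite -rmorphM fps_mulV ?rmorph1 // s0 mulr1.
have := sK s1 (fps_sqrt0 _ _ _); have := sK s2 (fps_sqrt0 _ _ _).
rewrite (boundary_gf_rho v z_neq0) (rho_factor z_neq0) /=.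
set a1 := ev z^-1 s1; set a2 := ev z^-1 s2.
set b1 := ev z^-1 (fps_inv s1 1); set b2 := ev z^-1 (fps_inv s2 1) => a2K a1K.
by rewrite -[LHS]mulr1 -a1K -[LHS]mulr1 -a2K; ring.
Qed.

Lemma height0_t_polys_ev_const z : ev z (height0_polys v * t1 * t2) = 1.
Proof.
have const n : (height0_polys v * t1 * t2) n = ((height0_polys v * t1 * t2) n).[0]%:P.
  apply: (poly_horner_inv_const (q := (boundary_polys v * fps_inv s1 1 * fps_inv s2 1) n)).
  move=> w w_neq0.
  by have := congr1 (fun f => f n) (height0_t_polys_ev w_neq0).
have -> : ev z (height0_polys v * t1 * t2) = ev 0 (height0_polys v * t1 * t2).
  by apply: fpsE => n; rewrite /fps_map /= !horner_evalE (const n) !hornerC.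
by rewrite !rmorphM /= height0_polys_ev0 !t_polys_ev0 ?mulr1 ?e1_0 ?e2_0 ?r1_0 ?r2_0.
Qed.

Lemma boundary_gf_factor x : x != 0 -> boundary_gf x v = ev x^-1 s1 * ev x^-1 s2.
Proof.
move=> x_neq0; rewrite (boundary_gf_rho v x_neq0) (rho_factor x_neq0).
have := height0_t_polys_ev_const x; rewrite !rmorphM /= height0_polys_ev => E.
by rewrite -[RHS]mul1r -E; ring.
Qed.

End SlitKernelFactor.

Lemma radAE (R : numFieldType) (x v : R) (r1 : fps R) :
  radA x v r1 = 2%:R * (qroot (e1 v) r1 - fpsT * fpsC x^-1).
Proof.
rewrite /radA /qroot /e1 [RHS]mulrBr
  [X in _ = X - _]mulrA [X in _ = X * _ - _]mulrC fpsC_invn2 mul1r.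
by rewrite fps_addE fps_linE rmorphN !rmorphM rmorphD /=; ring.
Qed.

Lemma radBE (R : numFieldType) (x v : R) (r2 : fps R) :
  radB x v r2 = 2%:R * (qroot (e2 v) r2 - fpsT * fpsC x^-1).
Proof.
rewrite /radB /qroot /e2 [RHS]mulrBr
  [X in _ = X - _]mulrA [X in _ = X * _ - _]mulrC fpsC_invn2 mul1r.
by rewrite fps_addE fps_linE !rmorphM rmorphB /=; ring.
Qed.

Theorem mainTheorem6 (R : rcfType) (x y v : R) (hx : x != 0) (hy : y != 0) :
  (exists r1 r2 r3 r4 : fps R,
      [/\ is_fps_sqrt (delta1 v) r1, is_fps_sqrt (delta2 v) r2,
          is_fps_sqrt (radA x v r1) r3 & is_fps_sqrt (radB x v r2) r4]) /\
  (forall r1 r2 r3 r4 : fps R,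
      is_fps_sqrt (delta1 v) r1 -> is_fps_sqrt (delta2 v) r2 ->
      is_fps_sqrt (radA x v r1) r3 -> is_fps_sqrt (radB x v r2) r4 ->
      fps_mul (S_gf x y v) (denom x y v) = fps_mul r3 r4).
Proof.
have delta1_0 : 0 < delta1 v 0%N by rewrite delta1E delta_0 ?e1_0 ?ltr01.
have delta2_0 : 0 < delta2 v 0%N by rewrite delta2E delta_0 ?e2_0 ?ltr01.
split.
  have [r1 r1_sqrt] := fps_sqrt_exists delta1_0.
  have [r2 r2_sqrt] := fps_sqrt_exists delta2_0.
  have [r3 r3_sqrt] : exists r3, is_fps_sqrt (radA x v r1) r3.
    apply: fps_sqrt_exists.
    by rewrite /radA /fps_add /fps_lin /= (r1_0 r1_sqrt) addr_gt0 ?ltr01.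
  have [r4 r4_sqrt] : exists r4, is_fps_sqrt (radB x v r2) r4.
    apply: fps_sqrt_exists.
    by rewrite /radB /fps_add /fps_lin /= (r2_0 r2_sqrt) addr_gt0 ?ltr01.
  by exists r1, r2, r3, r4.
move=> r1 r2 r3 r4 r1_sqrt r2_sqrt [r3r3 r3_gt0] [r4r4 r4_gt0].
rewrite S_gf_denom // (boundary_gf_factor r1_sqrt r2_sqrt hx) fps_mulE.
have s1s1 := s_polys_ev (e1_0 v) (r1_0 r1_sqrt) x^-1.
have s2s2 := s_polys_ev (e2_0 v) (r2_0 r2_sqrt) x^-1.
set s1 := fps_map _ (s_polys _ _) in s1s1 *; set s2 := fps_map _ (s_polys _ _) in s2s2 *.
apply: eq_fps_sqr.
- rewrite [RHS]mulrACA -[r3 * r3]fps_mulE -[r4 * r4]fps_mulE r3r3 r4r4.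
  by rewrite radAE radBE -s1s1 -s2s2; ring.
- by rewrite -(rmorph_nat (@fpsC R)) coef_fpsCM coef0_fpsM /s1 /s2 !sqrt1_ev_0 !mulr1 ltr0n.
- by rewrite coef0_fpsM mulr_gt0.
Qed.
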